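(* Let $\mathcal{X}\subseteq\mathbb{R}^d$, $\mathcal{Y}=\{-1,+1\}$, let $p(\bm{x},y)$ be a joint distribution on $\mathcal{X}\times\mathcal{Y}$ with $\pi_+=p(y=+1)\in(0,1)$, $\pi_-=1-\pi_+$, $\pi_+\neq1/2$, and $p_\pm(\bm{x})=p(\bm{x}\mid y=\pm1)$. Let $\ell:\mathbb{R}\times\mathcal{Y}\to[0,\infty)$ be a loss, $\ell_\pm(z):=\ell(z,\pm1)$, and $R(g)=\mathbb{E}_{p(\bm{x},y)}[\ell(g(\bm{x}),y)]$. Define the densities $\widetilde{p}_+(\bm{x})=\frac{\pi_+}{\pi_-^2+\pi_+}p_+(\bm{x})+\frac{\pi_-^2}{\pi_-^2+\pi_+}p_-(\bm{x})$, $\widetilde{p}_-(\bm{x})=\frac{\pi_+^2}{\pi_+^2+\pi_-}p_+(\bm{x})+\frac{\pi_-}{\pi_+^2+\pi_-}p_-(\bm{x})$, and for $t\in\{+,-\}$ (with $-t$ the opposite sign) the row vectors $\bm{\alpha}^{\mathrm S}_t=\frac{\pi_t^2}{\pi_+-\pi_-}(\pi_+,\,-\pi_-)$, $\bm{\alpha}^{\mathrm D}_t=\frac{1}{\pi_+-\pi_-}\big(\pi_-(\pi_t^2-\pi_{-t}),\,\pi_+(\pi_{-t}-\pi_t^2)\big)$. Set $R_{\mathrm{S\text{-}PC}}(g)=\sum_{t\in\{+,-\}}\mathbb{E}_{\widetilde p_t(\bm x)}\big[\bm{\alpha}^{\mathrm S}_t(\ell_+(g(\bm{x})),\ell_-(g(\bm{x})))^\top\big]$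 and $R_{\mathrm{D\text{-}PC}}(g)=\sum_{t\in\{+,-\}}\mathbb{E}_{\widetilde p_t(\bm x)}\big[\bm{\alpha}^{\mathrm D}_t(\ell_+(g(\bm{x})),\ell_-(g(\bm{x})))^\top\big]$. Then for every $g:\mathcal{X}\to\mathbb{R}$ for which these expectations are finite, $$R(g)=R_{\mathrm{SD\text{-}PC}}(g):=R_{\mathrm{S\text{-}PC}}(g)+R_{\mathrm{D\text{-}PC}}(g).$$
   Context: $\widetilde p_+$ and $\widetilde p_-$ model the marginal distributions of the instance judged more likely, respectively less likely, to belong to the positive class in a pairwise comparison; $R_{\mathrm{S\text{-}PC}}$ and $R_{\mathrm{D\text{-}PC}}$ are the parts of the risk attributed to similar and dissimilar pairs that also carry a pairwise-comparison label. *)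

From HB Require Import structures.
From mathcomp Require Import all_boot all_order all_algebra.
From mathcomp Require Import all_classical all_reals all_analysis.
Set Implicit Arguments. Unset Strict Implicit. Unset Printing Implicit Defensive.
Import Order.TTheory GRing.Theory Num.Theory.
Local Open Scope ring_scope.

(* Labels y in {-1,+1} and signs t in {+,-} are encoded by bool:
   true = +1 / +, false = -1 / -.  The opposite sign -t is ~~ t.
   Class-conditional densities pc y = p_y are taken w.r.t. a base
   measure mu on the instance space T. *)

Definition prior {R : realType} (pp : R) (t : bool) : R :=
  if t then pp else 1 - pp.

Definition ptil {R : realType} {T : Type} (pp : R) (pc : bool -> T -> R)
    (t : bool) (x : T) : R :=
  let pip := prior pp true in let pim := prior pp false in
  if t then pip / (pim ^+ 2 + pip) * pc true x + pim ^+ 2 / (pim ^+ 2 + pip) * pc false x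
  else pip ^+ 2 / (pip ^+ 2 + pim) * pc true x + pim / (pip ^+ 2 + pim) * pc false x.

Definition alphaS {R : realType} (pp : R) (t : bool) : R * R :=
  let pip := prior pp true in let pim := prior pp false in
  (prior pp t ^+ 2 / (pip - pim) * pip, prior pp t ^+ 2 / (pip - pim) * (- pim)).

Definition alphaD {R : realType} (pp : R) (t : bool) : R * R :=
  let pip := prior pp true in let pim := prior pp false in
  (pim * (prior pp t ^+ 2 - prior pp (~~ t)) / (pip - pim),
   pip * (prior pp (~~ t) - prior pp t ^+ 2) / (pip - pim)).

Definition Edens {R : realType} {d} {T : measurableType d}
    (mu : {measure set T -> \bar R}) (q : T -> R) (h : T -> R) : \bar R :=
  (\int[mu]_x (h x * q x)%:E)%E.

(* classification risk R(g) = E_{p(x,y)}[loss (g x) y], joint density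
   p(x,y) = pi_y p_y(x) w.r.t. mu (x) counting measure on labels *)
Definition risk {R : realType} {d} {T : measurableType d}
    (mu : {measure set T -> \bar R}) (pp : R) (pc : bool -> T -> R)
    (loss : R -> bool -> R) (g : T -> R) : \bar R :=
  (\int[mu]_x (\sum_(y : bool) loss (g x) y * (prior pp y * pc y x))%:E)%E.

Definition R_PC {R : realType} {d} {T : measurableType d}
    (mu : {measure set T -> \bar R}) (pp : R) (pc : bool -> T -> R)
    (alpha : R -> bool -> R * R) (loss : R -> bool -> R) (g : T -> R) : \bar R :=
  (\sum_(t : bool) Edens mu (ptil pp pc t)
      (fun x => (alpha pp t).1 * loss (g x) true + (alpha pp t).2 * loss (g x) false)%R)%E.

Definition R_SPC {R : realType} {d} {T : measurableType d}
    (mu : {measure set T -> \bar R}) (pp : R) (pc : bool -> T -> R)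
    (loss : R -> bool -> R) (g : T -> R) : \bar R :=
  R_PC mu pp pc (@alphaS R) loss g.

Definition R_DPC {R : realType} {d} {T : measurableType d}
    (mu : {measure set T -> \bar R}) (pp : R) (pc : bool -> T -> R)
    (loss : R -> bool -> R) (g : T -> R) : \bar R :=
  R_PC mu pp pc (@alphaD R) loss g.

Definition is_density {R : realType} {d} {T : measurableType d}
    (mu : {measure set T -> \bar R}) (q : T -> R) : Prop :=
  measurable_fun setT q /\ (forall x, 0 <= q x) /\ (\int[mu]_x (q x)%:E = 1)%E.

From HB Require Import structures.
From mathcomp Require Import all_boot all_order all_algebra.
From mathcomp Require Import all_classical all_reals all_analysis.
From mathcomp Require Import ring lra.
Import Order.TTheory GRing.Theory Num.Theory.
Local Open Scope ring_scope.

(* Both risks are integrals of loss-weighted combinations of the class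
   densities p_+ and p_-, so it suffices to compare the integrands pointwise.
   Summed over t, the combined row vectors alpha^S_t + alpha^D_t, weighted by
   \tilde p_t, give back exactly pi_+ p_+ for the coordinate of l_+ and
   pi_- p_- for the coordinate of l_-; this is a rational identity in pi_+
   whose only denominators are pi_+ - pi_- and pi_t^2 + pi_{-t}, the latter
   being pi_+^2 - pi_+ + 1 > 0.  Linearity of the integral does the rest. *)

Definition alpha_loss {R : pzRingType} (a : R * R) (l : bool -> R) : R :=
  a.1 * l true + a.2 * l false.

Lemma alpha_loss_ptil_sum (R : realType) (T : Type) (pp : R)
    (pc : bool -> T -> R) (x : T) (l : bool -> R) :
  pp != 2^-1 ->
  \sum_t alpha_loss (alphaS pp t) l * ptil pp pc t x
    + \sum_t alpha_loss (alphaD pp t) l * ptil pp pc t x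
  = \sum_y l y * (prior pp y * pc y x).
Proof.
move=> pp_neq_half.
have prior_subr_neq0 : pp - (1 - pp) != 0.
  by apply: contra_neq pp_neq_half => h; lra.
have ptil_denom_gt0 : 0 < pp ^+ 2 + (1 - pp) by nra.
rewrite !big_bool /alpha_loss /ptil /alphaS /alphaD /=.
by field; rewrite prior_subr_neq0 andbT gt_eqF.
Qed.

Section risk_decomposition.
Variables (R : realType) (d : measure_display) (T : measurableType d).
Variables (mu : {measure set T -> \bar R}) (pp : R) (pc : bool -> T -> R).
Variables (loss : R -> bool -> R) (g : T -> R).
Hypothesis integrable_loss_ptil : forall t y,
  mu.-integrable setT (fun x => (loss (g x) y * ptil pp pc t x)%:E).

Lemma integrable_alpha_loss_ptil (a : R * R) t :
  mu.-integrable setT (fun x => (alpha_loss a (loss (g x)) * ptil pp pc t x)%:E).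
Proof.
have := integrableD measurableT
  (integrableZl measurableT a.1 (integrable_loss_ptil t true))
  (integrableZl measurableT a.2 (integrable_loss_ptil t false)).
apply: eq_integrable => // x _ /=.
by rewrite -!EFinM -EFinD /alpha_loss mulrDl !mulrA.
Qed.

Let PC_integrand (alpha : R -> bool -> R * R) (x : T) : R :=
  \sum_t alpha_loss (alpha pp t) (loss (g x)) * ptil pp pc t x.

Lemma integrable_PC_integrand alpha :
  mu.-integrable setT (fun x => (PC_integrand alpha x)%:E).
Proof.
rewrite /PC_integrand; under eq_fun do rewrite -sumEFin.
by apply: integrable_sum => // t _; exact: integrable_alpha_loss_ptil.
Qed.

Lemma R_PC_integral alpha :
  R_PC mu pp pc alpha loss g = (\int[mu]_x (PC_integrand alpha x)%:E)%E.
Proof.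
rewrite /R_PC /Edens -integral_sum => // [|t]; last first.
  exact: integrable_alpha_loss_ptil.
by apply: eq_integral => x _; rewrite sumEFin.
Qed.

Lemma risk_eq_R_SPC_add_R_DPC : pp != 2^-1 ->
  risk mu pp pc loss g = (R_SPC mu pp pc loss g + R_DPC mu pp pc loss g)%E.
Proof.
move=> pp_neq_half.
rewrite /R_SPC /R_DPC !R_PC_integral -integralD //;
  [|exact: integrable_PC_integrand..].
apply: eq_integral => x _.
by rewrite -EFinD /PC_integrand alpha_loss_ptil_sum.
Qed.

End risk_decomposition.

Theorem theorem3p2 (R : realType) (d : measure_display) (T : measurableType d)
    (mu : {measure set T -> \bar R}) (pp : R) (pc : bool -> T -> R)
    (loss : R -> bool -> R) (g : T -> R) :
  0 < pp < 1 -> pp != 2^-1 ->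
  (forall y, is_density mu (pc y)) ->
  (forall z y, 0 <= loss z y) ->
  (forall y, measurable_fun setT (fun z => loss z y)) ->
  measurable_fun setT g ->
  (forall t y, mu.-integrable setT (fun x => (loss (g x) y * ptil pp pc t x)%:E)) ->
  risk mu pp pc loss g = (R_SPC mu pp pc loss g + R_DPC mu pp pc loss g)%E.
Proof.
(* Neither 0 < pi_+ < 1, the normalization of the densities, nor the sign and
   measurability of the loss play any role. *)
move=> _ pp_neq_half _ _ _ _ integrable_loss_ptil.
exact: risk_eq_R_SPC_add_R_DPC.
Qed.
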